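(* Let $(\boldsymbol x^H,\eta^H,\boldsymbol y^H,u^H)$ be the solution returned by Algorithm 1 (described in the context) and $(\boldsymbol x^*,\eta^*,\boldsymbol y^*,u^* )$ an optimal solution of the multistage model. Then $$z^{MS}_{T,R}(\boldsymbol x^H,\eta^H,\boldsymbol y^H,u^H)-z^{MS}_{T,R}(\boldsymbol x^*,\eta^*,\boldsymbol y^*,u^* )\le\sum_{t=1}^T\sum_{i=1}^Mf_{ti}.$$
   Context: Setting. Integers $T\ge2$, $M,N\ge1$; costs $f_{ti}\ge0$ (vector $\boldsymbol f_t$), $c_{tij}\ge0$ (vector $\boldsymbol c_t\in\mathbb R^{MN}$), capacities $h_{ti}>0$; $(\boldsymbol A_t\boldsymbol y)_j=\sum_iy_{ij}$, $(\boldsymbol B_t\boldsymbol y)_i=\frac1{h_{ti}}\sum_jy_{ij}$. Ceilings and maxima of vectors are componentwise. Scenario tree: finite rooted tree, node set $\mathcal T$, root $1$, all root-to-leaf paths of $T$ nodes; $\mathcal T_t$ nodes at depth $t$, $t_n$ period of $n$, $\mathcal L=\mathcal T_T$, $a(n)$ parent, $\mathcal C(n)$ children, $\mathcal P(n)$ nodes on the root-to-$n$ path (inclusive); probabilities $p_n>0$, $\sum_{n\in\mathcal T_t}p_n=1$, $\sum_{m\in\mathcal C(n)}p_m=p_n$; demands $\boldsymbol d_n\in\mathbb R^N_{\ge0}$. Risk parameters $\lambda_t\in[0,1]$, $\alpha_t\in(0,1)$ ($t\ge2$); $\tilde{\boldsymbol f}_n=\boldsymbol f_{t_n}$ if $n=1$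 else $(1-\lambda_{t_n})\boldsymbol f_{t_n}$; $\tilde{\boldsymbol c}_n=\boldsymbol c_{t_n}$ if $n=1$ else $(1-\lambda_{t_n})\boldsymbol c_{t_n}$; $\tilde\lambda_n=0$ if $n\in\mathcal L$ else $\lambda_{t_n+1}$; $\tilde\alpha_n=0$ if $n=1$ else $\lambda_{t_n}/(1-\alpha_{t_n})$. Multistage model: minimize $z^{MS}_{T,R}(\boldsymbol x,\eta,\boldsymbol y,u):=\sum_{n\in\mathcal T}p_n\big(\tilde{\boldsymbol f}_n^{\mathsf T}\sum_{m\in\mathcal P(n)}\boldsymbol x_m+\tilde{\boldsymbol c}_n^{\mathsf T}\boldsymbol y_n+\tilde\lambda_n\eta_n+\tilde\alpha_nu_n\big)$ over $\boldsymbol x_n\in\mathbb Z^M_+$, $\boldsymbol y_n\in\mathbb R^{MN}_+$ ($n\in\mathcal T$), $\eta_n\in\mathbb R$ ($n\notin\mathcal L$), $u_n\ge0$ ($n\ne1$), subject to $\boldsymbol A_{t_n}\boldsymbol y_n=\boldsymbol d_n$, $\boldsymbol B_{t_n}\boldsymbol y_n\le\sum_{m\in\mathcal P(n)}\boldsymbol x_m$ ($n\in\mathcal T$), $u_n+\eta_{a(n)}\ge\boldsymbol f_{t_n}^{\mathsf T}\sum_{m\in\mathcal P(n)}\boldsymbol x_m+\boldsymbol c_{t_n}^{\mathsf T}\boldsymbol y_n$ ($n\ne1$). Algorithm 1. Step 1: solve the LP relaxation (drop integrality of $\boldsymbol x$) of the multistage model, obtaining an optimal $(\boldsymbol x^{MSLP},\eta^{MSLP},\boldsymbol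 y^{MSLP},u^{MSLP})$; if all $\boldsymbol x^{MSLP}_n$ are integral, stop and return it. Step 2: set $k=0$ and $(\boldsymbol x^0,\eta^0,\boldsymbol y^0,u^0)=(\boldsymbol x^{MSLP},\eta^{MSLP},\boldsymbol y^{MSLP},u^{MSLP})$. Repeat until successive iterates differ by less than a tolerance $\epsilon$: (a) set $\boldsymbol x^{k+1}_1=\lceil\boldsymbol B_{t_1}\boldsymbol y^k_1\rceil$, $\boldsymbol x^{k+1}_n=\max_{m\in\mathcal P(n)}\lceil\boldsymbol B_{t_m}\boldsymbol y^k_m\rceil-\max_{m\in\mathcal P(a(n))}\lceil\boldsymbol B_{t_m}\boldsymbol y^k_m\rceil$ ($n\ne1$), $\eta^{k+1}_n=\max_{m\in\mathcal C(n)}\{\boldsymbol f_{t_m}^{\mathsf T}\sum_{l\in\mathcal P(m)}\boldsymbol x^{k+1}_l+\boldsymbol c_{t_m}^{\mathsf T}\boldsymbol y^k_m-u^k_m\}$ ($n\notin\mathcal L$); (b) for each $n\ne1$ independently, let $(\boldsymbol y^{k+1}_n,u^{k+1}_n)$ be an optimal solution of $\min\tilde{\boldsymbol c}_n^{\mathsf T}\boldsymbol y_n+\tilde\alpha_nu_n$ s.t. $\boldsymbol B_{t_n}\boldsymbol y_n\le\sum_{m\in\mathcal P(n)}\boldsymbol x^{k+1}_m$, $\boldsymbol A_{t_n}\boldsymbol y_n=\boldsymbol d_n$, $u_n-\boldsymbol c_{t_n}^{\mathsf T}\boldsymbol y_n\ge\boldsymbol f_{t_n}^{\mathsf T}\sum_{m\in\mathcal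 P(n)}\boldsymbol x^{k+1}_m-\eta^{k+1}_{a(n)}$, $\boldsymbol y_n\ge0$, $u_n\ge0$; for $n=1$ solve the same problem without $u_1$ and the last constraint; (c) $k\leftarrow k+1$. Return the final iterate, denoted $(\boldsymbol x^H,\eta^H,\boldsymbol y^H,u^H)$. *)

From HB Require Import structures.
From mathcomp Require Import all_boot all_order all_algebra.
From mathcomp Require Import reals.
Set Implicit Arguments. Unset Strict Implicit. Unset Printing Implicit Defensive.
Import Order.TTheory GRing.Theory Num.Theory.
Local Open Scope ring_scope.

(* Problem data.  Periods are 1-based natural numbers t = 1..T; the values  *)
(* of period-indexed data outside 1..T are irrelevant.  The scenario tree   *)
Record data (R : realType) := Data {
  T : nat; M : nat; N : nat;
  f : nat -> 'I_M -> R;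
  c : nat -> 'I_M -> 'I_N -> R;
  h : nat -> 'I_M -> R;
  node : finType;
  root : node;
  par : node -> node;                   (* a(n), meaningful for n <> root *)
  per : node -> nat;
  p : node -> R;
  d : node -> 'I_N -> R;
  lam : nat -> R;
  alpha : nat -> R
}.
Arguments T {R} D : rename.  Arguments M {R} D : rename.  Arguments N {R} D : rename.
Arguments f {R} D _ _ : rename.  Arguments c {R} D _ _ _ : rename.  Arguments h {R} D _ _ : rename.
Arguments node {R} D : rename.  Arguments root {R} D : rename.  Arguments par {R} D _ : rename.
Arguments per {R} D _ : rename.  Arguments p {R} D _ : rename.  Arguments d {R} D _ _ : rename.
Arguments lam {R} D _ : rename.  Arguments alpha {R} D _ : rename.

Section Model.
Variable R : realType.
Variable D : data R.

Local Notation T := (T D).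
Local Notation M := (M D).
Local Notation N := (N D).
Local Notation V := (node D).
Local Notation r := (root D).
Local Notation a := (par D).
Local Notation per := (per D).

Definition children (n : V) : {set V} := [set m | (m != r) && (a m == n)].

Definition path_nodes (n : V) : {set V} :=
  [set m | [exists k : 'I_T, (k < per n)%N && (iter k a n == m)]].

Definition wf : Prop :=
  [/\ [/\ (2 <= T)%N, (1 <= M)%N & (1 <= N)%N],
      [/\ (forall t i, (1 <= t <= T)%N -> 0 <= f D t i),
          (forall t i j, (1 <= t <= T)%N -> 0 <= c D t i j) &
          (forall t i, (1 <= t <= T)%N -> 0 < h D t i)],
      [/\ per r = 1%N,
          (forall n, n != r -> per n = (per (a n)).+1),
          (forall n, (per n <= T)%N) &
          (forall n, (per n < T)%N -> exists m, m \in children n)],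
      [/\ (forall n, 0 < p D n),
          (forall t, (1 <= t <= T)%N -> \sum_(n | per n == t) p D n = 1),
          (forall n, (per n < T)%N -> \sum_(m in children n) p D m = p D n) &
          (forall n j, 0 <= d D n j)] &
      (forall t, (2 <= t <= T)%N ->
         (0 <= lam D t <= 1) /\ (0 < alpha D t < 1))].

Definition is_leaf (n : V) : bool := per n == T.

Definition Ay (y : 'I_M -> 'I_N -> R) (j : 'I_N) : R := \sum_(i < M) y i j.
Definition By (t : nat) (y : 'I_M -> 'I_N -> R) (i : 'I_M) : R :=
  (h D t i)^-1 * \sum_(j < N) y i j.

Definition ftil (n : V) (i : 'I_M) : R :=
  if n == r then f D (per n) i else (1 - lam D (per n)) * f D (per n) i.
Definition ctil (n : V) (i : 'I_M) (j : 'I_N) : R :=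
  if n == r then c D (per n) i j else (1 - lam D (per n)) * c D (per n) i j.
Definition lamtil (n : V) : R := if is_leaf n then 0 else lam D (per n).+1.
Definition alphatil (n : V) : R :=
  if n == r then 0 else lam D (per n) / (1 - alpha D (per n)).

(* Variables are represented on all nodes; eta_n for leaves and u_1 are    *)
(* dummies: they have coefficient 0 in the objective and occur in no       *)
(* constraint.                                                             *)
Definition xvar := V -> 'I_M -> R.
Definition yvar := V -> 'I_M -> 'I_N -> R.
Definition svar := V -> R.

Definition cap (x : xvar) (n : V) (i : 'I_M) : R := \sum_(m in path_nodes n) x m i.

Definition fcost (x : xvar) (n : V) : R := \sum_(i < M) f D (per n) i * cap x n i.
Definition ccost (y : 'I_M -> 'I_N -> R) (n : V) : R :=
  \sum_(i < M) \sum_(j < N) c D (per n) i j * y i j.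

Definition zMS (x : xvar) (eta : svar) (y : yvar) (u : svar) : R :=
  \sum_(n : V) p D n *
    (\sum_(i < M) ftil n i * cap x n i
     + \sum_(i < M) \sum_(j < N) ctil n i j * y n i j
     + lamtil n * eta n + alphatil n * u n).

Definition lp_feasible (x : xvar) (eta : svar) (y : yvar) (u : svar) : Prop :=
  [/\ [/\ (forall n i, 0 <= x n i),
          (forall n i j, 0 <= y n i j) &
          (forall n, n != r -> 0 <= u n)],
      (forall n j, Ay (y n) j = d D n j),
      (forall n i, By (per n) (y n) i <= cap x n i) &
      (forall n, n != r -> fcost x n + ccost (y n) n <= u n + eta (a n))].

Definition ms_feasible x eta y u : Prop :=
  lp_feasible x eta y u /\ (forall n i, x n i \is a Num.int).

Definition lp_optimal x eta y u : Prop :=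
  lp_feasible x eta y u /\
  forall x' eta' y' u', lp_feasible x' eta' y' u' -> zMS x eta y u <= zMS x' eta' y' u'.

Definition ms_optimal x eta y u : Prop :=
  ms_feasible x eta y u /\
  forall x' eta' y' u', ms_feasible x' eta' y' u' -> zMS x eta y u <= zMS x' eta' y' u'.

Definition is_max (S : {set V}) (F : V -> R) (v : R) : Prop :=
  (exists2 m, m \in S & v = F m) /\ (forall m, m \in S -> F m <= v).

Definition ceilR (v : R) : R := (Num.ceil v)%:~R.

Definition step_a (yk : yvar) (uk : svar) (x1 : xvar) (eta1 : svar) : Prop :=
  [/\ (forall i, x1 r i = ceilR (By (per r) (yk r) i)),
      (exists Mx : xvar,
         (forall n i, is_max (path_nodes n) (fun m => ceilR (By (per m) (yk m) i)) (Mx n i))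
         /\ (forall n i, n != r -> x1 n i = Mx n i - Mx (a n) i)) &
      (forall n, ~~ is_leaf n ->
         is_max (children n) (fun m => fcost x1 m + ccost (yk m) m - uk m) (eta1 n))].

Definition sub_feasible (x1 : xvar) (eta1 : svar) (n : V)
    (yn : 'I_M -> 'I_N -> R) (un : R) : Prop :=
  [/\ (forall i, By (per n) yn i <= cap x1 n i),
      (forall j, Ay yn j = d D n j),
      fcost x1 n - eta1 (a n) <= un - ccost yn n,
      (forall i j, 0 <= yn i j) & 0 <= un].

Definition sub_obj (n : V) (yn : 'I_M -> 'I_N -> R) (un : R) : R :=
  \sum_(i < M) \sum_(j < N) ctil n i j * yn i j + alphatil n * un.

Definition sub_feasible_root (x1 : xvar) (yn : 'I_M -> 'I_N -> R) : Prop :=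
  [/\ (forall i, By (per r) yn i <= cap x1 r i),
      (forall j, Ay yn j = d D r j) &
      (forall i j, 0 <= yn i j)].

Definition sub_obj_root (yn : 'I_M -> 'I_N -> R) : R :=
  \sum_(i < M) \sum_(j < N) ctil r i j * yn i j.

Definition step_b (x1 : xvar) (eta1 : svar) (y1 : yvar) (u1 : svar) : Prop :=
  (sub_feasible_root x1 (y1 r) /\
   forall yn, sub_feasible_root x1 yn -> sub_obj_root (y1 r) <= sub_obj_root yn)
  /\
  (forall n, n != r ->
     sub_feasible x1 eta1 n (y1 n) (u1 n) /\
     forall yn un, sub_feasible x1 eta1 n yn un ->
       sub_obj n (y1 n) (u1 n) <= sub_obj n yn un).

Definition close (eps : R) (x : xvar) (eta : svar) (y : yvar) (u : svar)
    (x' : xvar) (eta' : svar) (y' : yvar) (u' : svar) : Prop :=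
  [/\ (forall n i, `|x n i - x' n i| < eps),
      (forall n, ~~ is_leaf n -> `|eta n - eta' n| < eps),
      (forall n i j, `|y n i j - y' n i j| < eps) &
      (forall n, n != r -> `|u n - u' n| < eps)].

Definition alg1_output (eps : R) (xH : xvar) (etaH : svar) (yH : yvar) (uH : svar)
  : Prop :=
  exists (xs : nat -> xvar) (es : nat -> svar) (ys : nat -> yvar) (us : nat -> svar),
    lp_optimal (xs 0%N) (es 0%N) (ys 0%N) (us 0%N) /\
    (
      ((forall n i, xs 0%N n i \is a Num.int) /\
       [/\ xH = xs 0%N, etaH = es 0%N, yH = ys 0%N & uH = us 0%N])
    \/
      (~ (forall n i, xs 0%N n i \is a Num.int) /\
       exists K : nat, [/\ (1 <= K)%N,
         (forall k, (k < K)%N ->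
            step_a (ys k) (us k) (xs k.+1) (es k.+1) /\
            step_b (xs k.+1) (es k.+1) (ys k.+1) (us k.+1)),
         close eps (xs K.-1) (es K.-1) (ys K.-1) (us K.-1) (xs K) (es K) (ys K) (us K),
         (forall k, (1 <= k < K)%N ->
            ~ close eps (xs k.-1) (es k.-1) (ys k.-1) (us k.-1) (xs k) (es k) (ys k) (us k)) &
         [/\ xH = xs K, etaH = es K, yH = ys K & uH = us K]])).

End Model.

From Pilot Require Import Defs.
From HB Require Import structures.
From mathcomp Require Import all_boot all_order all_algebra.
From mathcomp Require Import reals.
From mathcomp Require Import zify ring lra.
Import Order.TTheory GRing.Theory Num.Theory.
Local Open Scope ring_scope.

(** The first rounding of the LP optimum raises every cumulative capacity
    [sum_{m in P(n)} x_m] by less than one unit, hence every [eta_n] by at most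
    the fixed cost of one unit per facility in period [t_n + 1]; weighted by
    the probabilities and the risk coefficients, these extra costs telescope to
    [sum_t sum_i f_ti].  Afterwards no iteration increases the objective: step
    (b) re-optimises [(y, u)] against a feasible incumbent, and re-rounding
    capacities that are already integral and cover [B y] cannot raise them.
    Finally the LP optimum is a lower bound for the integer optimum. *)

Section Proposition4.
Context {R : realType} {D : data R} (wfD : wf D).

Local Notation V := (node D).
Local Notation r := (Defs.root D).
Local Notation a := (Defs.par D).
Local Notation per := (Defs.per D).
Local Notation T := (Defs.T D).
Local Notation path_nodes := (@path_nodes R D).

Implicit Types (n m l : V) (x : xvar D) (y : yvar D) (eta u : svar D).

Lemma per_root : per r = 1%N.
Proof. by case: wfD => _ _ []. Qed.

Lemma per_par n : n != r -> per n = (per (a n)).+1.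
Proof. by case: wfD => _ _ [_ + _ _] _ _; apply. Qed.
Arguments per_par {n}.

Lemma per_le_T n : (per n <= T)%N.
Proof. by case: wfD => _ _ [_ _ + _] _ _; apply. Qed.

Lemma per_gt0 n : (0 < per n)%N.
Proof. by case: (eqVneq n r) => [->|/per_par ->]; rewrite ?per_root. Qed.

Lemma f_ge0 t i : (1 <= t <= T)%N -> 0 <= f D t i.
Proof. by case: wfD => _ [+ _ _] _ _ _; apply. Qed.

Lemma f_per_ge0 n i : 0 <= f D (per n) i.
Proof. by apply: f_ge0; rewrite per_gt0 per_le_T. Qed.

Lemma p_gt0 n : 0 < p D n.
Proof. by case: wfD => _ _ _ [+ _ _ _] _; apply. Qed.

Lemma lam_bounds t : (2 <= t <= T)%N -> 0 <= lam D t <= 1.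
Proof. by case: wfD => _ _ _ _ H /H []. Qed.

Lemma per_iter_par n k : (k < per n)%N -> per (iter k a n) = (per n - k)%N.
Proof.
elim: k => [|k IH] lt_k; first by rewrite subn0.
have {}IH := IH (ltnW lt_k).
have nr : iter k a n != r by apply: contraTneq lt_k => E; move: IH; rewrite E per_root; lia.
by rewrite iterS; move: (per_par nr); rewrite IH; lia.
Qed.

Lemma path_nodesP n m :
  reflect (exists2 k, (k < per n)%N & iter k a n = m) (m \in path_nodes n).
Proof.
rewrite inE; apply: (iffP existsP) => [[k /andP [lt_k /eqP <-]]|[k lt_k <-]].
  by exists k.
by exists (Ordinal (leq_trans lt_k (per_le_T n))); rewrite /= lt_k eqxx.
Qed.

Lemma path_nodes_refl n : n \in path_nodes n.
Proof. by apply/path_nodesP; exists 0%N; rewrite ?per_gt0. Qed.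

Lemma path_nodes_per m n : m \in path_nodes n -> (per m <= per n)%N.
Proof. by case/path_nodesP => k lt_k <-; rewrite per_iter_par // leq_subr. Qed.

Lemma path_nodes_trans {n m l} :
  m \in path_nodes n -> l \in path_nodes m -> l \in path_nodes n.
Proof.
case/path_nodesP => k lt_k <-; case/path_nodesP => j; rewrite per_iter_par // => lt_j <-.
by apply/path_nodesP; exists (j + k)%N; rewrite ?iterD //; lia.
Qed.

Lemma path_nodes_root m : (m \in path_nodes r) = (m == r).
Proof.
apply/path_nodesP/eqP => [[k]|->]; last by exists 0%N; rewrite ?per_root.
by rewrite per_root ltnS leqn0 => /eqP -> <-.
Qed.

Lemma path_nodes_par n m : n != r ->
  (m \in path_nodes n) = (m == n) || (m \in path_nodes (a n)).
Proof.
move=> nr; apply/idP/idP.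
  case/path_nodesP => [[|k]] lt_k <-; first by rewrite eqxx.
  apply/orP; right; apply/path_nodesP; exists k; last by rewrite iterSr.
  by rewrite -ltnS -(per_par nr).
case/orP => [/eqP ->|]; first exact: path_nodes_refl.
apply: path_nodes_trans; apply/path_nodesP; exists 1%N => //.
by rewrite (per_par nr) ltnS per_gt0.
Qed.

Lemma cap_root x i : cap x r i = x r i.
Proof. by rewrite /cap (big_pred1 r) // => m; rewrite /= path_nodes_root. Qed.

Lemma cap_par x n i : n != r -> cap x n i = x n i + cap x (a n) i.
Proof.
move=> nr; rewrite /cap (bigD1 n) ?path_nodes_refl //=; congr (_ + _).
apply: eq_bigl => m; rewrite path_nodes_par //.
case: (eqVneq m n) => [->|] /=; last by rewrite andbT.
by apply/esym/negP => /path_nodes_per; rewrite (per_par nr) ltnn.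
Qed.

Definition fsum t := \sum_(i < M D) f D t i.

Definition rounding_excess n := \sum_(i < M D) ftil n i + lamtil n * fsum (per n).+1.

Lemma sum_fsum_ge0 : 0 <= \sum_(1 <= t < T.+1) fsum t.
Proof.
rewrite big_nat; apply: sumr_ge0 => t t_range; apply: sumr_ge0 => i _.
by apply: f_ge0; rewrite -ltnS.
Qed.

Lemma ftil_ge0 n i : 0 <= ftil n i.
Proof.
rewrite /ftil; case: (eqVneq n r) => [_|nr]; first exact: f_per_ge0.
have /andP [_ lam_le1] : 0 <= lam D (per n) <= 1.
  by apply: lam_bounds; rewrite (per_par nr) ltnS per_gt0 -(per_par nr) per_le_T.
by rewrite mulr_ge0 ?f_per_ge0 ?subr_ge0.
Qed.

Lemma lamtil_ge0 n : 0 <= lamtil n.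
Proof.
rewrite /lamtil /is_leaf; case: eqP => // /eqP nleaf.
have /andP [] // : 0 <= lam D (per n).+1 <= 1.
by apply: lam_bounds; rewrite ltnS per_gt0 ltn_neqAle nleaf per_le_T.
Qed.

Lemma fcost_le {x x1 n delta} :
  (forall i, cap x1 n i <= cap x n i + delta) ->
  fcost x1 n <= fcost x n + delta * fsum (per n).
Proof.
move=> le_cap; rewrite /fcost /fsum mulr_sumr -big_split; apply: ler_sum => i _ /=.
by rewrite [delta * _]mulrC -mulrDr ler_wpM2l ?f_per_ge0 ?le_cap.
Qed.

Lemma zMS_shift_le {x x1 eta eta1 y u delta} :
  0 <= delta ->
  (forall n i, cap x1 n i <= cap x n i + delta) ->
  (forall n, ~~ is_leaf n -> eta1 n <= eta n + delta * fsum (per n).+1) ->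
  zMS x1 eta1 y u <= zMS x eta y u + delta * \sum_n p D n * rounding_excess n.
Proof.
move=> delta_ge0 le_cap le_eta; rewrite /zMS mulr_sumr -big_split; apply: ler_sum => n _ /=.
rewrite mulrCA -mulrDr ler_wpM2l ?(ltW (p_gt0 n)) // /rounding_excess.
have le_fix : \sum_i ftil n i * cap x1 n i
    <= \sum_i ftil n i * cap x n i + delta * \sum_i ftil n i.
  rewrite mulr_sumr -big_split; apply: ler_sum => i _ /=.
  by rewrite [delta * _]mulrC -mulrDr ler_wpM2l ?ftil_ge0 ?le_cap.
have le_risk : lamtil n * eta1 n <= lamtil n * eta n + delta * (lamtil n * fsum (per n).+1).
  case leaf_n: (is_leaf n); first by rewrite /lamtil leaf_n !(mul0r, mulr0, addr0).
  by rewrite mulrCA -mulrDr ler_wpM2l ?lamtil_ge0 ?le_eta ?leaf_n.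
by rewrite mulrDr; lra.
Qed.

Definition cap_monotone (x : xvar D) :=
  forall n m i, m \in path_nodes n -> cap x m i <= cap x n i.

Definition covers (x : xvar D) (y : yvar D) :=
  forall n i, By (per n) (y n) i <= cap x n i.

Definition risk_feasible (x : xvar D) (eta : svar D) (y : yvar D) (u : svar D) :=
  forall n, n != r -> fcost x n + ccost (y n) n <= u n + eta (a n).

Definition recourse_feasible (y : yvar D) (u : svar D) :=
  [/\ forall n i j, 0 <= y n i j, forall n j, Ay (y n) j = d D n j
    & forall n, n != r -> 0 <= u n].

Lemma cap_monotone_ge0 {x} : (forall n i, 0 <= x n i) -> cap_monotone x.
Proof.
move=> x_ge0 n m i mn; rewrite /cap [leRHS](bigID (mem (path_nodes m))) /=.
rewrite -[leLHS]addr0 lerD ?sumr_ge0 // le_eqVlt; apply/orP; left.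
apply/eqP/eq_bigl => l; apply/idP/andP => [lm|[] //].
by rewrite (path_nodes_trans mn lm).
Qed.

Lemma ceilR_ceilR (v : R) : ceilR (ceilR v) = ceilR v.
Proof. by rewrite /ceilR intrKceil. Qed.

Lemma ceilR_le_add1 (v : R) : ceilR v <= v + 1.
Proof. by case/andP: (ceil_itv v); rewrite /ceilR intrB => /ltW; lra. Qed.

Lemma ceilR_le (v w : R) : v <= w -> ceilR v <= ceilR w.
Proof. by move=> /le_ceil; rewrite /ceilR ler_int. Qed.

Section StepA.
Context {y : yvar D} {u : svar D} {x1 : xvar D} {eta1 : svar D}.
Hypothesis stepA : step_a y u x1 eta1.

Lemma cap_step_a n i :
  is_max (path_nodes n) (fun m => ceilR (By (per m) (y m) i)) (cap x1 n i).
Proof.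
case: stepA => x1_root [Mx [Mx_max x1_diff]] _.
suff -> : cap x1 n i = Mx n i by [].
elim: {n}(per n) {-2}n (leqnn (per n)) => [|k IH] n per_n.
  by have := per_gt0 n; lia.
case: (eqVneq n r) => [->|nr].
  rewrite cap_root x1_root; case: (Mx_max r i) => [[m]].
  by rewrite path_nodes_root => /eqP -> ->.
rewrite cap_par // IH ?x1_diff ?subrK //.
by move: per_n; rewrite (per_par nr).
Qed.

Lemma cap_step_a_int n i : ceilR (cap x1 n i) = cap x1 n i.
Proof. by case: (cap_step_a n i) => [[m _ ->] _]; rewrite ceilR_ceilR. Qed.

Lemma cap_monotone_step_a : cap_monotone x1.
Proof.
move=> n m i mn; case: (cap_step_a m i) => [[l ml ->] _].
exact: (cap_step_a n i).2 _ (path_nodes_trans mn ml).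
Qed.

Lemma covers_step_a : covers x1 y.
Proof.
move=> n i; apply: le_trans (ceil_ge _) _.
exact: (cap_step_a n i).2 _ (path_nodes_refl n).
Qed.

Lemma risk_feasible_step_a : risk_feasible x1 eta1 y u.
Proof.
case: stepA => _ _ eta1_max n nr.
have a_nleaf : ~~ is_leaf (a n).
  by rewrite /is_leaf neq_ltn -ltnS -(per_par nr) ltnS per_le_T.
have := (eta1_max _ a_nleaf).2 n; rewrite inE nr eqxx => /(_ isT); lra.
Qed.

Lemma cap_step_a_le {x} :
  covers x y -> cap_monotone x -> forall n i, cap x1 n i <= ceilR (cap x n i).
Proof.
move=> cov mono n i; case: (cap_step_a n i) => [[m mn ->] _].
by apply/ceilR_le/(le_trans (cov m i))/mono.
Qed.

Lemma eta_step_a_le {x eta delta} :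
  risk_feasible x eta y u -> (forall n i, cap x1 n i <= cap x n i + delta) ->
  forall n, ~~ is_leaf n -> eta1 n <= eta n + delta * fsum (per n).+1.
Proof.
case: stepA => _ _ eta1_max risk le_cap n nleaf.
case: (eta1_max n nleaf) => [[m]]; rewrite inE => /andP [mr /eqP am] -> _.
have := fcost_le (le_cap m); have := risk m mr.
by rewrite (per_par mr) am; lra.
Qed.

Lemma zMS_step_a_le {x eta delta} :
  0 <= delta -> covers x y -> cap_monotone x -> risk_feasible x eta y u ->
  (forall n i, ceilR (cap x n i) <= cap x n i + delta) ->
  zMS x1 eta1 y u <= zMS x eta y u + delta * \sum_n p D n * rounding_excess n.
Proof.
move=> delta_ge0 cov mono risk ceil_le.
have le_cap n i : cap x1 n i <= cap x n i + delta.
  exact: le_trans (cap_step_a_le cov mono n i) (ceil_le n i).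
exact: zMS_shift_le delta_ge0 le_cap (eta_step_a_le risk le_cap).
Qed.

End StepA.

Lemma step_b_feasible {x1 eta1 y1 u1} : step_b x1 eta1 y1 u1 ->
  [/\ covers x1 y1, risk_feasible x1 eta1 y1 u1 & recourse_feasible y1 u1].
Proof.
case=> [[[cov_r dem_r y_r_ge0] _] sub].
have feas n : n != r -> sub_feasible x1 eta1 n (y1 n) (u1 n) by case/sub.
split; [move=> n i| move=> n /feas [_ _ risk _ _]; lra | split].
- by case: (eqVneq n r) => [->|/feas []].
- by move=> n i j; case: (eqVneq n r) => [->|/feas []].
- by move=> n j; case: (eqVneq n r) => [->|/feas []].
- by move=> n /feas [].
Qed.

Lemma zMS_step_b_le {x1 eta1 y u y1 u1} :
  recourse_feasible y u -> covers x1 y -> risk_feasible x1 eta1 y u ->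
  step_b x1 eta1 y1 u1 -> zMS x1 eta1 y1 u1 <= zMS x1 eta1 y u.
Proof.
case=> y_ge0 dem u_ge0 cov risk [[_ opt_r] opt].
rewrite /zMS; apply: ler_sum => n _; rewrite ler_wpM2l ?(ltW (p_gt0 n)) //.
case: (eqVneq n r) => [->|nr].
  have := opt_r (y r) (And3 (cov r) (dem r) (y_ge0 r)).
  by rewrite /sub_obj_root /alphatil eqxx !mul0r; lra.
have feas : sub_feasible x1 eta1 n (y n) (u n).
  by split; rewrite ?u_ge0 //; have := risk n nr; lra.
by have := (opt n nr).2 _ _ feas; rewrite /sub_obj; lra.
Qed.

Lemma sum_nodes_per (G : nat -> R) :
  \sum_n p D n * G (per n) = \sum_(1 <= t < T.+1) G t.
Proof.
transitivity (\sum_(1 <= t < T.+1) \sum_n (if per n == t then p D n * G t else 0)).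
  rewrite exchange_big /=; apply: eq_bigr => n _.
  rewrite -big_mkcond -big_filter.
  have -> : [seq t <- index_iota 1 T.+1 | per n == t] = [:: per n].
    rewrite (@eq_filter _ _ (pred1 (per n))); last by move=> t; rewrite /= eq_sym.
    apply: filter_pred1_uniq; first exact: iota_uniq.
    by rewrite mem_index_iota per_gt0 ltnS per_le_T.
  by rewrite big_seq1.
apply: eq_big_nat => t t_range; rewrite -big_mkcond /= -mulr_suml.
by case: wfD => _ _ _ [_ + _ _] _ => ->; rewrite ?mul1r.
Qed.

(** Period [t] pays for [fsum t] with weight [1 - lam t] through [ftil], and
    period [t - 1] with weight [lam t] through [lamtil]; moving [lam t * fsum t]
    between them makes the excesses telescope to [fsum]. *)
Definition risk_share t := if (1 < t <= T)%N then lam D t * fsum t else 0.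

Lemma rounding_excessE n :
  rounding_excess n = fsum (per n) + (risk_share (per n).+1 - risk_share (per n)).
Proof.
rewrite /rounding_excess /ftil /lamtil /is_leaf /risk_share ltnS per_gt0 per_le_T andbT.
rewrite [(per n < T)%N]ltn_neqAle per_le_T andbT /=.
case: (eqVneq n r) => [->|nr]; first by rewrite per_root subr0; case: eqP; rewrite ?mul0r.
rewrite (per_par nr) ltnS per_gt0 -(per_par nr) -mulr_sumr.
by case: eqP => _ /=; rewrite ?mul0r /fsum; ring.
Qed.

Lemma sum_rounding_excess :
  \sum_n p D n * rounding_excess n = \sum_(1 <= t < T.+1) fsum t.
Proof.
under eq_bigr do rewrite rounding_excessE.
rewrite (sum_nodes_per (fun t => fsum t + (risk_share t.+1 - risk_share t))).
rewrite big_split /= telescope_sumr // /risk_share !ltnn andbF.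
by rewrite subrr addr0.
Qed.

Lemma zMS_rounding_le {x eta y u x1 eta1} :
  lp_feasible x eta y u -> step_a y u x1 eta1 ->
  zMS x1 eta1 y u <= zMS x eta y u + \sum_(1 <= t < T.+1) fsum t.
Proof.
case=> [[x_ge0 _ _] _ cov risk] stepA.
have ceil_cap n i : ceilR (cap x n i) <= cap x n i + 1 by apply: ceilR_le_add1.
have := zMS_step_a_le stepA ler01 cov (cap_monotone_ge0 x_ge0) risk ceil_cap.
by rewrite mul1r sum_rounding_excess.
Qed.

Lemma zMS_reround_le {y u x eta y1 u1 x1 eta1} :
  step_a y u x eta -> step_b x eta y1 u1 -> step_a y1 u1 x1 eta1 ->
  zMS x1 eta1 y1 u1 <= zMS x eta y1 u1.
Proof.
move=> stepA stepB stepA1; have [cov risk _] := step_b_feasible stepB.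
have ceil_cap n i : ceilR (cap x n i) <= cap x n i + 0.
  by rewrite addr0 (cap_step_a_int stepA).
have := zMS_step_a_le stepA1 (lexx 0) cov (cap_monotone_step_a stepA) risk ceil_cap.
by rewrite mul0r addr0.
Qed.

Lemma zMS_iterates_le {xs : nat -> xvar D} {es : nat -> svar D}
    {ys : nat -> yvar D} {us : nat -> svar D} {K} :
  recourse_feasible (ys 0%N) (us 0%N) ->
  (forall k, (k < K)%N -> step_a (ys k) (us k) (xs k.+1) (es k.+1) /\
                          step_b (xs k.+1) (es k.+1) (ys k.+1) (us k.+1)) ->
  forall k, (k < K)%N ->
  zMS (xs k.+1) (es k.+1) (ys k.+1) (us k.+1) <= zMS (xs 1%N) (es 1%N) (ys 0%N) (us 0%N).
Proof.
move=> feas0 steps; elim=> [|k IH] lt_k.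
  have [stepA stepB] := steps 0%N lt_k.
  exact: zMS_step_b_le feas0 (covers_step_a stepA) (risk_feasible_step_a stepA) stepB.
have [stepA stepB] := steps k (ltnW lt_k).
have [stepA1 stepB1] := steps k.+1 lt_k.
have [_ _ feas] := step_b_feasible stepB.
apply: le_trans (IH (ltnW lt_k)).
apply: le_trans (zMS_reround_le stepA stepB stepA1).
exact: zMS_step_b_le feas (covers_step_a stepA1) (risk_feasible_step_a stepA1) stepB1.
Qed.

End Proposition4.

Theorem proposition4 (R : realType) (D : data R) (eps : R)
    (xH : xvar D) (etaH : svar D) (yH : yvar D) (uH : svar D)
    (xs : xvar D) (es : svar D) (ys : yvar D) (us : svar D) :
  wf D -> 0 < eps ->
  alg1_output eps xH etaH yH uH ->
  ms_optimal xs es ys us ->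
  zMS xH etaH yH uH - zMS xs es ys us
    <= \sum_(1 <= t < (T D).+1) \sum_(i < M D) f D t i.
Proof.
move=> wfD _ [xs0 [es0 [ys0 [us0 [[lp0 lp0_opt] output]]]]] [ms_feas _].
have lp_le_opt := lp0_opt _ _ _ _ ms_feas.1.
have F_ge0 := sum_fsum_ge0 wfD.
case: output => [[_ [-> -> -> ->]] | [_ [K [K_gt0 steps _ _ [-> -> -> ->]]]]].
  by rewrite /fsum in F_ge0; lra.
have feas0 : recourse_feasible (ys0 0%N) (us0 0%N).
  by case: lp0 => [[_ y_ge0 u_ge0] dem _ _].
have rounding := zMS_rounding_le wfD lp0 (steps 0%N K_gt0).1.
have := zMS_iterates_le wfD feas0 steps K.-1; rewrite prednK // => /(_ (leqnn K)).
by rewrite /fsum in rounding; lra.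
Qed.
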